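(* Let $(V,\star,\alpha,1)$ be a unital hom-associative algebra of type $I_2$. Then it is of type $II_3$ if and only if it is of type $II_1$.
   Context: Let $k$ be a commutative ring. A unital hom-associative algebra is a tuple $(V,\star,\alpha,1)$ where $V$ is a $k$-module, $\star:V\times V\to V$ is $k$-bilinear, $\alpha:V\to V$ is $k$-linear, and $1\in V$ satisfies $1\star x=x\star 1=x$ for all $x\in V$. It is of type $T$ if the identity for $T$ holds for all $x,y,z\in V$: $I_2$: $x\star(\alpha(y)\star z)=(x\star\alpha(y))\star z$; $II_1$: $x\star(\alpha(y)\star\alpha(z))=(\alpha(x)\star\alpha(y))\star z$; $II_3$: $\alpha(x)\star(\alpha(y)\star z)=(x\star\alpha(y))\star\alpha(z)$. *)

From HB Require Import structures.
From mathcomp Require Import all_boot all_order all_algebra.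
Set Implicit Arguments. Unset Strict Implicit. Unset Printing Implicit Defensive.
Import GRing.Theory.
Local Open Scope ring_scope.

Definition unital_hom_alg (k : comPzRingType) (V : lmodType k)
  (star : V -> V -> V) (alpha : V -> V) (one : V) : Prop :=
  [/\ (forall (a : k) (x y z : V), star (a *: x + y) z = a *: star x z + star y z),
      (forall (a : k) (x y z : V), star x (a *: y + z) = a *: star x y + star x z),
      (forall (a : k) (x y : V), alpha (a *: x + y) = a *: alpha x + alpha y)
    & (forall x : V, star one x = x /\ star x one = x)].

Definition type_I2 (V : Type) (star : V -> V -> V) (alpha : V -> V) : Prop :=
  forall x y z, star x (star (alpha y) z) = star (star x (alpha y)) z.

Definition type_II1 (V : Type) (star : V -> V -> V) (alpha : V -> V) : Prop :=
  forall x y z, star x (star (alpha y) (alpha z)) = star (star (alpha x) (alpha y)) z.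

Definition type_II3 (V : Type) (star : V -> V -> V) (alpha : V -> V) : Prop :=
  forall x y z, star (alpha x) (star (alpha y) z) = star (star x (alpha y)) (alpha z).

From HB Require Import structures.
From mathcomp Require Import all_boot all_order all_algebra.

(* Under the identity I2, x * (alpha y * z) = (x * alpha y) * z, any product
   whose middle factor lies in the image of alpha may be reassociated.  Both
   sides of the II3 identity have this shape, and reassociating them turns
     alpha x * (alpha y * z) = (x * alpha y) * alpha z
   into
     (alpha x * alpha y) * z = x * (alpha y * alpha z),
   which is the II1 identity read from right to left.  This holds for an arbitrary
   binary operation and map. *)

Section TypeI2.

Context {V : Type} {star : V -> V -> V} {alpha : V -> V}.
Hypothesis I2 : type_I2 star alpha.

Lemma II3_iff_II1_at (x y z : V) :
  star (alpha x) (star (alpha y) z) = star (star x (alpha y)) (alpha z) <->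
  star x (star (alpha y) (alpha z)) = star (star (alpha x) (alpha y)) z.
Proof.
by rewrite (I2 (alpha x)) -(I2 x); split=> /esym.
Qed.

End TypeI2.

Theorem proposition2p7 (k : comPzRingType) (V : lmodType k)
  (star : V -> V -> V) (alpha : V -> V) (one : V) :
  unital_hom_alg star alpha one ->
  type_I2 star alpha ->
  (type_II3 star alpha <-> type_II1 star alpha).
Proof.
move=> _ I2; split=> H x y z.
- exact: (II3_iff_II1_at I2 x y z).1 (H x y z).
- exact: (II3_iff_II1_at I2 x y z).2 (H x y z).
Qed.
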